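(* For any $a\in\mathbb R$ and $\beta\in\mathbb S^1$, let $t_0=-\log\sqrt{1+a^2}$ and $s=\frac{-a}{\sqrt{1+a^2}+1}=-\tan\big(\tfrac12\tan^{-1}a\big)$. Then $$\gamma_{\beta,a}(t+t_0)=\gamma^{\mathrm v}_{\beta+\pi/2-2\tan^{-1}s,\ s}(t)\qquad\text{for all }t\in\mathbb R.$$
   Context: Horocyclic parameterization: $\gamma_{\beta,a}(t)=e^{i\beta}\frac{(2+ia)\tanh(t/2)+ia}{ia\tanh(t/2)-2+ia}$, $(\beta,a,t)\in\mathbb S^1\times\mathbb R\times\mathbb R$. Vertex parameterization: $\gamma^{\mathrm v}_{\omega,s}(t)=e^{i\omega}\frac{s+i\tanh(t/2)}{1+is\tanh(t/2)}$, $(\omega,s)\in\mathbb S^1\times(-1,1)$, $t\in\mathbb R$. Both are unit-speed geodesics of the Poincaré metric $g_H=\frac{4|dz|^2}{(1-|z|^2)^2}$ on the open unit disk. *)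

From Stdlib Require Import Reals.
From Coquelicot Require Export Coquelicot.
Open Scope R_scope.

Definition tanh (x : R) : R := (exp x - exp (- x)) / (exp x + exp (- x)).

(* e^{i b} for b : R (angles b represent points of S^1 = R / 2piZ) *)
Definition cexpi (b : R) : C := (cos b, sin b).

Definition ci : C := (0, 1).

Definition gamma_h (beta a t : R) : C :=
  Cmult (cexpi beta)
    (Cdiv (Cplus (Cmult (Cplus (RtoC 2) (Cmult ci (RtoC a))) (RtoC (tanh (t / 2))))
                 (Cmult ci (RtoC a)))
          (Cplus (Cminus (Cmult (Cmult ci (RtoC a)) (RtoC (tanh (t / 2)))) (RtoC 2))
                 (Cmult ci (RtoC a)))).

Definition gamma_v (omega s t : R) : C :=
  Cmult (cexpi omega)
    (Cdiv (Cplus (RtoC s) (Cmult ci (RtoC (tanh (t / 2)))))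
          (Cplus (RtoC 1) (Cmult (Cmult ci (RtoC s)) (RtoC (tanh (t / 2)))))).

(** Both curves are Möbius images of [u = tanh (t/2)]. Under the half-angle
    substitution [a = -2s/(1-s^2)] one has [sqrt (1+a^2) = r] with
    [r = (1+s^2)/(1-s^2)], and [tanh (ln r / 2) = (r-1)/(r+1) = s^2], so by
    the subtraction formula for [tanh] the time shift by [t0 = - ln r] acts
    on [u] as [u |-> (u - s^2)/(1 - s^2 u)]. Since
    [e^{i(pi/2 - 2 atan s)} = i (1 - i s)/(1 + i s)], what remains is a
    rational identity in [s] and [u]. *)

From Pilot Require Import Defs.
From Stdlib Require Import Reals Lra.
From Coquelicot Require Import Coquelicot.
Open Scope R_scope.

(* [Reals] exports its own [tanh], hence the qualified [Defs.tanh]. *)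

Lemma tanh_half (x : R) : Defs.tanh (x / 2) = (exp x - 1) / (exp x + 1).
Proof.
  unfold Defs.tanh.
  assert (Hx : exp x = exp (x / 2) * exp (x / 2)) by (rewrite <- exp_plus; f_equal; field).
  pose proof (exp_pos (x / 2)).
  rewrite exp_Ropp, Hx; field; split; nra.
Qed.

Lemma tanh_half_ln (r : R) : 0 < r -> Defs.tanh (ln r / 2) = (r - 1) / (r + 1).
Proof. intro Hr; rewrite tanh_half, exp_ln; trivial. Qed.

Lemma tanh_bound (x : R) : -1 < Defs.tanh x < 1.
Proof.
  unfold Defs.tanh; pose proof (exp_pos x); pose proof (exp_pos (- x)).
  split; [apply Rlt_div_r | apply Rlt_div_l]; lra.
Qed.

Lemma tanh_sub (x y : R) :
  Defs.tanh (x - y) =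
  (Defs.tanh x - Defs.tanh y) / (1 - Defs.tanh x * Defs.tanh y).
Proof.
  unfold Defs.tanh, Rminus.
  rewrite Ropp_plus_distr, Ropp_involutive, !exp_plus.
  pose proof (exp_pos x); pose proof (exp_pos (- x)).
  pose proof (exp_pos y); pose proof (exp_pos (- y)).
  field; repeat split; nra.
Qed.

Lemma tan_half (x : R) : cos (x / 2) <> 0 -> tan (x / 2) = sin x / (1 + cos x).
Proof.
  intro Hc.
  replace x with (2 * (x / 2)) at 2 3 by field.
  rewrite sin_2a, cos_2a_cos; unfold tan.
  pose proof (Rsqr_pos_lt _ Hc); unfold Rsqr in *.
  field; split; [lra | assumption].
Qed.

Lemma cos_2atan (x : R) : cos (2 * atan x) = (1 - x ^ 2) / (1 + x ^ 2).
Proof.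
  rewrite cos_2a_cos, cos_atan, Rsqr_pow2.
  assert (Hq : sqrt (1 + x ^ 2) ^ 2 = 1 + x ^ 2) by (apply pow2_sqrt; nra).
  assert (0 < sqrt (1 + x ^ 2)) by (apply sqrt_lt_R0; nra).
  field_simplify; [rewrite Hq; field |..]; nra.
Qed.

Lemma sin_2atan (x : R) : sin (2 * atan x) = 2 * x / (1 + x ^ 2).
Proof.
  rewrite sin_2a, cos_atan, sin_atan, Rsqr_pow2.
  assert (Hq : sqrt (1 + x ^ 2) ^ 2 = 1 + x ^ 2) by (apply pow2_sqrt; nra).
  assert (0 < sqrt (1 + x ^ 2)) by (apply sqrt_lt_R0; nra).
  field_simplify; [rewrite Hq; field |..]; nra.
Qed.

Lemma cexpi_add (x y : R) : cexpi (x + y) = Cmult (cexpi x) (cexpi y).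
Proof.
  unfold cexpi, Cmult; rewrite cos_plus, sin_plus.
  apply injective_projections; simpl; ring.
Qed.

Lemma cexpi_PI2 : cexpi (PI / 2) = ci.
Proof. unfold cexpi, ci; rewrite cos_PI2, sin_PI2; reflexivity. Qed.

Lemma cexpi_opp_2atan (x : R) :
  cexpi (- (2 * atan x)) = Cdiv (Cminus 1 (Cmult ci x)) (Cplus 1 (Cmult ci x)).
Proof.
  unfold cexpi, ci, Cdiv, Cinv, Cmult, Cplus, Cminus, Copp, RtoC; simpl.
  rewrite cos_neg, sin_neg, cos_2atan, sin_2atan.
  apply injective_projections; simpl; field; nra.
Qed.

Definition horo_ratio (a u : R) : C :=
  Cdiv (Cplus (Cmult (Cplus (RtoC 2) (Cmult ci (RtoC a))) (RtoC u)) (Cmult ci (RtoC a)))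
       (Cplus (Cminus (Cmult (Cmult ci (RtoC a)) (RtoC u)) (RtoC 2)) (Cmult ci (RtoC a))).

Definition vertex_ratio (s u : R) : C :=
  Cdiv (Cplus (RtoC s) (Cmult ci (RtoC u)))
       (Cplus (RtoC 1) (Cmult (Cmult ci (RtoC s)) (RtoC u))).

Lemma gamma_h_horo_ratio (beta a t : R) :
  gamma_h beta a t = Cmult (cexpi beta) (horo_ratio a (Defs.tanh (t / 2))).
Proof. reflexivity. Qed.

Lemma gamma_v_vertex_ratio (omega s t : R) :
  gamma_v omega s t = Cmult (cexpi omega) (vertex_ratio s (Defs.tanh (t / 2))).
Proof. reflexivity. Qed.

Lemma horo_ratio_vertex_ratio (s u : R) : s ^ 2 < 1 -> -1 < u < 1 ->
  horo_ratio (-2 * s / (1 - s ^ 2)) ((u - s ^ 2) / (1 - s ^ 2 * u)) =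
  Cmult (Cmult ci (Cdiv (Cminus 1 (Cmult ci s)) (Cplus 1 (Cmult ci s)))) (vertex_ratio s u).
Proof.
  intros Hs Hu.
  assert (Hsu : 0 < 1 - s ^ 2 * u) by nra.
  assert (0 < (1 - s ^ 2 * u) * (1 - s ^ 2)) by (apply Rmult_lt_0_compat; lra).
  unfold horo_ratio, vertex_ratio, ci, Cdiv, Cinv, Cmult, Cplus, Cminus, Copp, RtoC; simpl.
  apply injective_projections; simpl; field; repeat split; try nra.
  all: apply Rgt_not_eq, Rplus_lt_le_0_compat; [nra | apply Rle_0_sqr].
Qed.

Lemma horocyclic_eq_vertex (beta s t : R) : s ^ 2 < 1 ->
  gamma_h beta (-2 * s / (1 - s ^ 2)) (t - ln ((1 + s ^ 2) / (1 - s ^ 2))) =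
  gamma_v (beta + PI / 2 - 2 * atan s) s t.
Proof.
  intro Hs.
  assert (Hr : 0 < (1 + s ^ 2) / (1 - s ^ 2)) by (apply Rdiv_lt_0_compat; nra).
  assert (Hshift : Defs.tanh ((t - ln ((1 + s ^ 2) / (1 - s ^ 2))) / 2) =
                   (Defs.tanh (t / 2) - s ^ 2) / (1 - s ^ 2 * Defs.tanh (t / 2))).
  { replace ((t - ln ((1 + s ^ 2) / (1 - s ^ 2))) / 2)
      with (t / 2 - ln ((1 + s ^ 2) / (1 - s ^ 2)) / 2) by field.
    rewrite tanh_sub, tanh_half_ln by assumption.
    replace (((1 + s ^ 2) / (1 - s ^ 2) - 1) / ((1 + s ^ 2) / (1 - s ^ 2) + 1))
      with (s ^ 2) by (field; lra).
    f_equal; ring. }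
  rewrite gamma_h_horo_ratio, gamma_v_vertex_ratio, Hshift,
    horo_ratio_vertex_ratio by auto using tanh_bound.
  replace (beta + PI / 2 - 2 * atan s) with (beta + PI / 2 + - (2 * atan s)) by ring.
  rewrite !cexpi_add, cexpi_PI2, cexpi_opp_2atan.
  ring.
Qed.

Definition half_param (a : R) : R := - a / (sqrt (1 + a ^ 2) + 1).

Lemma half_param_tan (a : R) : half_param a = - tan (atan a / 2).
Proof.
  pose proof (atan_bound a).
  assert (0 < sqrt (1 + a ^ 2)) by (apply sqrt_lt_R0; nra).
  rewrite tan_half by (apply Rgt_not_eq, cos_gt_0; lra).
  rewrite sin_atan, cos_atan, Rsqr_pow2; unfold half_param.
  field; lra.
Qed.

Lemma half_param_sq (a : R) :
  half_param a ^ 2 = (sqrt (1 + a ^ 2) - 1) / (sqrt (1 + a ^ 2) + 1).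
Proof.
  assert (Hr : sqrt (1 + a ^ 2) ^ 2 = 1 + a ^ 2) by (apply pow2_sqrt; nra).
  assert (0 < sqrt (1 + a ^ 2)) by (apply sqrt_lt_R0; nra).
  unfold half_param.
  replace ((- a / (sqrt (1 + a ^ 2) + 1)) ^ 2)
    with (a ^ 2 / (sqrt (1 + a ^ 2) + 1) ^ 2) by (field; lra).
  replace (a ^ 2) with (sqrt (1 + a ^ 2) ^ 2 - 1) at 1 by lra.
  field; lra.
Qed.

Lemma half_param_sq_lt_1 (a : R) : half_param a ^ 2 < 1.
Proof.
  rewrite half_param_sq.
  assert (0 <= sqrt (1 + a ^ 2)) by apply sqrt_pos.
  apply Rlt_div_l; lra.
Qed.

Lemma sqrt_1_plus_sq_half_param (a : R) :
  sqrt (1 + a ^ 2) = (1 + half_param a ^ 2) / (1 - half_param a ^ 2).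
Proof.
  rewrite half_param_sq.
  assert (0 <= sqrt (1 + a ^ 2)) by apply sqrt_pos.
  field; lra.
Qed.

Lemma half_param_inv (a : R) : a = -2 * half_param a / (1 - half_param a ^ 2).
Proof.
  rewrite half_param_sq; unfold half_param.
  assert (0 <= sqrt (1 + a ^ 2)) by apply sqrt_pos.
  field; lra.
Qed.

Theorem lemma3p7 (a beta : R) :
  let t0 := - ln (sqrt (1 + a ^ 2)) in
  let s := - a / (sqrt (1 + a ^ 2) + 1) in
  s = - tan (atan a / 2) /\
  (forall t : R, gamma_h beta a (t + t0) = gamma_v (beta + PI / 2 - 2 * atan s) s t).
Proof.
  cbv zeta; fold (half_param a).
  split; [apply half_param_tan |].
  intro t.
  rewrite sqrt_1_plus_sq_half_param, (half_param_inv a) at 1.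
  apply horocyclic_eq_vertex, half_param_sq_lt_1.
Qed.
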